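(* Let $n,k$ be positive integers with $k\le\frac14 n$. Then every $k$-homogeneous partial latin square of order $n$ is contained in a $(k+1)$-homogeneous partial latin square of order $n$ (that is, some of its blank cells can be filled to obtain a $(k+1)$-homogeneous partial latin square).
   Context: A $k$-homogeneous partial latin square of order $n$ is an $n\times n$ array in which each cell is either blank or contains one of the symbols $\{1,2,\dots,n\}$, such that (i) no symbol occurs twice in any row or any column, (ii) each symbol occurs exactly $k$ times in the array, and (iii) each row and each column contains exactly $k$ filled cells. *)

From mathcomp Require Import all_boot.
Set Implicit Arguments. Unset Strict Implicit. Unset Printing Implicit Defensive.

(* A partial array of order n: cell (r,c) is blank (None) or holds Some s,
   with symbols {1,..,n} represented by 'I_n. *)
Definition parray (n : nat) := ('I_n -> 'I_n -> option 'I_n).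

Definition latin_prop n (L : parray n) : Prop :=
  (forall r c1 c2 s, L r c1 = Some s -> L r c2 = Some s -> c1 = c2) /\
  (forall c r1 r2 s, L r1 c = Some s -> L r2 c = Some s -> r1 = r2).

Definition homogeneous_pls n k (L : parray n) : Prop :=
  [/\ latin_prop L,
      (forall s : 'I_n, #|[set rc : 'I_n * 'I_n | L rc.1 rc.2 == Some s]| = k),
      (forall r : 'I_n, #|[set c : 'I_n | L r c != None]| = k) &
      (forall c : 'I_n, #|[set r : 'I_n | L r c != None]| = k)].

Definition pls_contained n (L M : parray n) : Prop :=
  forall r c s, L r c = Some s -> M r c = Some s.

From mathcomp Require Import all_boot zify.
Set Implicit Arguments. Unset Strict Implicit. Unset Printing Implicit Defensive.

(* To pass from a k-homogeneous partial latin square L to a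
   (k+1)-homogeneous one it suffices to fill one new cell in every row,
   every column, and with every symbol:
   1. choose a permutation sigma of the columns with every cell (r, sigma r)
      blank in L;
   2. choose a permutation tau of the symbols such that tau r occurs neither
      in row r nor in column sigma r of L;
   3. write tau r into the cell (r, sigma r).
   Both choices are perfect matchings in a bipartite graph on n + n vertices,
   obtained from an Ore-type criterion: if deg r + deg c >= n for every row
   vertex r and column vertex c, a perfect matching exists.  In step 1 every
   degree is n - k, in step 2 every degree is at least n - 2k; the
   hypothesis 4k <= n makes the criterion apply. *)

(* Bipartite matchings between two copies of a finite type T: e r c means
   that row r may be matched with column c. *)
Section OreMatching.
Variables (T : finType) (e : rel T).

Definition matching (A : {set T}) (g : T -> T) :=
  {in A &, injective g} /\ {in A, forall x, e x (g x)}.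

Lemma matching_add A g r c : matching A g -> r \notin A -> c \notin g @: A ->
  e r c -> matching (r |: A) (fun x => if x == r then c else g x).
Proof.
move=> [gi ge] rA cA erc; split.
  move=> x y; rewrite !in_setU1 => /orP[/eqP->|xA] /orP[/eqP->|yA] //=;
    rewrite ?eqxx.
  - case: eqP => [->//|_ E]; case/negP: cA; rewrite E; exact: imset_f.
  - case: eqP => [xr|_]; first by move: rA; rewrite -xr xA.
    move=> E; case/negP: cA; rewrite -E; exact: imset_f.
  - case: eqP => [xr|_]; first by move: rA; rewrite -xr xA.
    case: eqP => [yr|_]; first by move: rA; rewrite -yr yA.
    exact: gi.
move=> x; rewrite in_setU1 => /orP[/eqP->|xA]; first by rewrite eqxx.
case: eqP => [xr|_]; first by move: rA; rewrite -xr xA.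
exact: ge.
Qed.

Lemma matching_move A g x c : matching A g -> x \in A -> c \notin g @: A ->
  e x c -> matching A (fun y => if y == x then c else g y).
Proof.
move=> [gi ge] xA cA exc; split.
  move=> y z yA zA /=.
  case: eqP => [->|yx]; case: eqP => [->|zx] //.
  - move=> E; case/negP: cA; rewrite E; exact: imset_f.
  - move=> E; case/negP: cA; rewrite -E; exact: imset_f.
  - exact: gi.
move=> y yA /=; case: eqP => [->//|_]; exact: ge.
Qed.

Lemma exists_notin (A : {set T}) : #|A| < #|T| -> exists x, x \notin A.
Proof.
move=> ltA; have /card_gt0P[x]: 0 < #|~: A| by have := cardsC A; lia.
by rewrite inE; exists x.
Qed.

Hypothesis ore : forall r c, #|T| <= #|[set c' | e r c']| + #|[set r' | e r' c]|.

Lemma pivot_exists A g r c : matching A g -> #|A| < #|T| ->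
  (forall c', e r c' -> c' \in g @: A) -> (forall r', e r' c -> r' \in A) ->
  exists2 x, x \in A & e r (g x) && e x c.
Proof.
move=> [gi _] ltA nbr_r nbr_c.
set P := [set x in A | e r (g x)]; set Q := [set x in A | e x c].
have cardP : #|P| = #|[set c' | e r c']|.
  rewrite -(@card_in_imset _ _ g P); last first.
    by move=> x y; rewrite !inE => /andP[xA _] /andP[yA _]; exact: gi.
  suff -> : g @: P = [set c' | e r c'] by [].
  apply/setP=> y; rewrite inE; apply/imsetP/idP.
    by case=> x; rewrite inE => /andP[_ ?] ->.
  move=> ery; have /imsetP[x xA def_y] := nbr_r y ery.
  by exists x => //; rewrite inE xA -def_y ery.
have cardQ : #|Q| = #|[set r' | e r' c]|.
  by apply: eq_card => y; rewrite !inE; case eyc: (e y c); rewrite ?andbF ?nbr_c.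
have subPQ : P :|: Q \subset A by apply/subsetP=> y; rewrite !inE => /orP[]/andP[].
have /card_gt0P[x] : 0 < #|P :&: Q|.
  have := cardsUI P Q; have := subset_leq_card subPQ; have := ore r c; lia.
by rewrite !inE => /andP[/andP[xA ergx] /andP[_ exc]]; exists x; rewrite ?ergx.
Qed.

Lemma matching_augment A g : matching A g -> #|A| < #|T| ->
  exists (A' : {set T}) (g' : T -> T), #|A'| = #|A|.+1 /\ matching A' g'.
Proof.
move=> mAg ltA; have [gi ge] := mAg.
have [r rA] := exists_notin ltA.
have [c cA] : exists c, c \notin g @: A by apply: exists_notin; rewrite card_in_imset.
have card_add r' : r' \notin A -> #|r' |: A| = #|A|.+1 by move=> r'A; rewrite cardsU1 r'A.
case: (pickP (fun c' => (c' \notin g @: A) && e r c')) => [c' /andP[c'A erc']|nbr_r].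
  by exists (r |: A), (fun x => if x == r then c' else g x);
    split; [exact: card_add | exact: matching_add].
case: (pickP (fun r' => (r' \notin A) && e r' c)) => [r' /andP[r'A er'c]|nbr_c].
  by exists (r' |: A), (fun x => if x == r' then c else g x);
    split; [exact: card_add | exact: matching_add].
have [x xA /andP[ergx exc]] : exists2 x, x \in A & e r (g x) && e x c.
  apply: pivot_exists => // [c' erc'|r' er'c].
    by have := nbr_r c'; rewrite erc' andbT => /negbFE.
  by have := nbr_c r'; rewrite er'c andbT => /negbFE.
(* Move x to c, then give its old column g x to r. *)
have mAg1 := matching_move mAg xA cA exc.
set g1 := (fun y => if y == x then c else g y) in mAg1.
exists (r |: A), (fun y => if y == r then g x else g1 y); split; first exact: card_add.
apply: matching_add => //; apply/imsetP => [[y yA]]; rewrite /g1.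
case: eqP => [_ E|yx E]; first by case/negP: cA; rewrite -E imset_f.
by apply: yx; apply: gi.
Qed.

Lemma ore_perfect_matching : exists f : T -> T, injective f /\ forall r, e r (f r).
Proof.
have grow m : m <= #|T| ->
    exists (A : {set T}) (g : T -> T), #|A| = m /\ matching A g.
  elim: m => [|m IH] lemT.
    by exists set0, id; rewrite cards0; split=> //; split=> x; rewrite in_set0.
  have [A [g [cardA mAg]]] := IH (ltnW lemT).
  by rewrite -cardA; apply: matching_augment mAg _; rewrite cardA.
have [A [g [cardA [gi ge]]]] := grow _ (leqnn #|T|).
have AT : A = setT by apply/eqP; rewrite eqEcard subsetT cardsT cardA leqnn.
exists g; split; first by move=> x y; apply: gi; rewrite AT inE.
by move=> r; apply: ge; rewrite AT inE.
Qed.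

End OreMatching.

Lemma card_avoid2 (T : finType) (B C : {set T}) :
  #|T| - (#|B| + #|C|) <= #|[set x | (x \notin B) && (x \notin C)]|.
Proof.
have -> : [set x | (x \notin B) && (x \notin C)] = ~: (B :|: C).
  by apply/setP=> x; rewrite !inE negb_or.
have := cardsC (B :|: C); have := (leq_card_setU B C).1; lia.
Qed.

Lemma card_line_symbols (I S : finType) (line : I -> option S) :
  #|[set s | [exists i, line i == Some s]]| <= #|[set i | line i != None]|.
Proof.
rewrite -(card_imset _ Some_inj).
apply: leq_trans (leq_imset_card line _); apply: subset_leq_card.
apply/subsetP => _ /imsetP[s /[!inE] /existsP[i /eqP Ei] ->].
by apply/imsetP; exists i; rewrite ?inE Ei.
Qed.

Lemma card_proj1 (I J : finType) (P : pred (I * J)) :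
  #|[set i | [exists j, P (i, j)]]| <= #|[set ij | P ij]|.
Proof.
apply: leq_trans (leq_imset_card fst _); apply: subset_leq_card.
by apply/subsetP => i /[!inE] /existsP[j Pij]; apply/imsetP; exists (i, j); rewrite ?inE.
Qed.

Lemma card_proj2 (I J : finType) (P : pred (I * J)) :
  #|[set j | [exists i, P (i, j)]]| <= #|[set ij | P ij]|.
Proof.
apply: leq_trans (leq_imset_card snd _); apply: subset_leq_card.
by apply/subsetP => j /[!inE] /existsP[i Pij]; apply/imsetP; exists (i, j); rewrite ?inE.
Qed.

Section Transversal.
Variables (n k : nat) (L : parray n).
Hypothesis HL : homogeneous_pls k L.

Definition row_symbols (r : 'I_n) : {set 'I_n} := [set s | [exists c, L r c == Some s]].
Definition col_symbols (c : 'I_n) : {set 'I_n} := [set s | [exists r, L r c == Some s]].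

Lemma card_row_symbols r : #|row_symbols r| <= k.
Proof. by case: HL => _ _ Hr _; rewrite -(Hr r); apply: card_line_symbols. Qed.

Lemma card_col_symbols c : #|col_symbols c| <= k.
Proof. by case: HL => _ _ _ Hc; rewrite -(Hc c); apply: (card_line_symbols (L^~ c)). Qed.

Lemma card_symbol_rows s : #|[set r | s \in row_symbols r]| <= k.
Proof.
case: HL => _ Hs _ _; rewrite -(Hs s).
apply: leq_trans (card_proj1 (fun rc : 'I_n * 'I_n => L rc.1 rc.2 == Some s)).
by apply: subset_leq_card; apply/subsetP => r; rewrite /row_symbols !inE.
Qed.

Lemma card_symbol_cols s : #|[set c | s \in col_symbols c]| <= k.
Proof.
case: HL => _ Hs _ _; rewrite -(Hs s).
apply: leq_trans (card_proj2 (fun rc : 'I_n * 'I_n => L rc.1 rc.2 == Some s)).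
by apply: subset_leq_card; apply/subsetP => c; rewrite /col_symbols !inE.
Qed.

Lemma card_blank_row r : #|[set c | L r c == None]| = n - k.
Proof.
case: HL => _ _ Hr _; rewrite cardsCs -(Hr r) card_ord.
by congr (_ - _); apply: eq_card => c; rewrite !inE.
Qed.

Lemma card_blank_col c : #|[set r | L r c == None]| = n - k.
Proof.
case: HL => _ _ _ Hc; rewrite cardsCs -(Hc c) card_ord.
by congr (_ - _); apply: eq_card => r; rewrite !inE.
Qed.

Lemma blank_transversal : 2 * k <= n ->
  exists sigma : 'I_n -> 'I_n, injective sigma /\ forall r, L r (sigma r) = None.
Proof.
move=> le2kn.
have [sigma [sigma_inj blank]] : exists sigma : 'I_n -> 'I_n,
    injective sigma /\ forall r, L r (sigma r) == None.
  apply: (@ore_perfect_matching _ (fun r c => L r c == None)) => r c.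
  by rewrite card_ord card_blank_row card_blank_col; lia.
by exists sigma; split=> // r; apply/eqP.
Qed.

Lemma fresh_symbols (sigma : 'I_n -> 'I_n) : injective sigma -> 4 * k <= n ->
  exists tau : 'I_n -> 'I_n, injective tau /\
    forall r, (tau r \notin row_symbols r) && (tau r \notin col_symbols (sigma r)).
Proof.
move=> sigma_inj le4kn.
apply: (@ore_perfect_matching _
  (fun r s => (s \notin row_symbols r) && (s \notin col_symbols (sigma r)))) => r s.
rewrite card_ord.
have deg_row := card_avoid2 (row_symbols r) (col_symbols (sigma r)).
set Rs := [set r' | s \in row_symbols r']; set Cs := [set r' | s \in col_symbols (sigma r')].
have deg_sym := card_avoid2 Rs Cs.
have -> : [set r' | (s \notin row_symbols r') && (s \notin col_symbols (sigma r'))]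
          = [set r' | (r' \notin Rs) && (r' \notin Cs)].
  by apply/setP => r'; rewrite !inE.
have card_Cs : #|Cs| <= k.
  rewrite -(card_imset _ sigma_inj); apply: leq_trans (card_symbol_cols s).
  by apply: subset_leq_card; apply/subsetP => _ /imsetP[r' /[!inE] ? ->].
have card_Rs : #|Rs| <= k := card_symbol_rows s.
rewrite card_ord in deg_row deg_sym; apply: leq_trans (leq_add deg_row deg_sym).
have := card_row_symbols r; have := card_col_symbols (sigma r); lia.
Qed.

End Transversal.

Section Filling.
Variables (n k : nat) (L : parray n) (sigma tau : 'I_n -> 'I_n).
Hypotheses (HL : homogeneous_pls k L) (sigma_inj : injective sigma) (tau_inj : injective tau).
Hypothesis blank : forall r, L r (sigma r) = None.
Hypothesis fresh : forall r,
  (tau r \notin row_symbols L r) && (tau r \notin col_symbols L (sigma r)).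

Definition fill_transversal : parray n := fun r c =>
  if L r c is Some s then Some s else if c == sigma r then Some (tau r) else None.

Lemma fill_contains : pls_contained L fill_transversal.
Proof. by move=> r c s; rewrite /fill_transversal => ->. Qed.

Lemma fill_someE r c s : (fill_transversal r c == Some s) =
  (L r c == Some s) || (c == sigma r) && (tau r == s).
Proof.
rewrite /fill_transversal; case Lrc: (L r c) => [s'|] /=.
  have -> : (c == sigma r) = false by apply/eqP => def_c; rewrite def_c blank in Lrc.
  by rewrite /= orbF.
by case: (c =P sigma r).
Qed.

Lemma fill_filledE r c :
  (fill_transversal r c != None) = (L r c != None) || (c == sigma r).
Proof. by rewrite /fill_transversal; case: (L r c) => //=; case: (c =P sigma r). Qed.

Lemma tau_not_in_row r c : L r c != Some (tau r).
Proof.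
apply/eqP => Lrc; have /andP[/negP fresh_row _] := fresh r.
by apply: fresh_row; rewrite inE; apply/existsP; exists c; rewrite Lrc.
Qed.

Lemma tau_not_in_col r r' : L r' (sigma r) != Some (tau r).
Proof.
apply/eqP => Lrc; have /andP[_ /negP fresh_col] := fresh r.
by apply: fresh_col; rewrite inE; apply/existsP; exists r'; rewrite Lrc.
Qed.

Lemma fill_latin : latin_prop fill_transversal.
Proof.
case: HL => [[row_latin col_latin] _ _ _]; split.
  move=> r c1 c2 s /eqP; rewrite fill_someE => /orP[/eqP L1 | /andP[/eqP-> /eqP t1]];
    move=> /eqP; rewrite fill_someE => /orP[/eqP L2 | /andP[/eqP-> /eqP t2]] //.
  - exact: row_latin L1 L2.
  - by move: (tau_not_in_row r c1); rewrite L1 t2 eqxx.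
  - by move: (tau_not_in_row r c2); rewrite L2 t1 eqxx.
move=> c r1 r2 s /eqP; rewrite fill_someE => /orP[/eqP L1 | /andP[/eqP c1 /eqP t1]];
  move=> /eqP; rewrite fill_someE => /orP[/eqP L2 | /andP[/eqP c2 /eqP t2]].
- exact: col_latin L1 L2.
- by move: (tau_not_in_col r2 r1); rewrite -c2 L1 t2 eqxx.
- by move: (tau_not_in_col r1 r2); rewrite -c1 L2 t1 eqxx.
- by apply: sigma_inj; rewrite -c1 -c2.
Qed.

Lemma fill_homogeneous : homogeneous_pls k.+1 fill_transversal.
Proof.
case: HL => _ Hs Hr Hc; split; first exact: fill_latin.
- move=> s; set r0 := invF tau_inj s.
  have -> : [set rc : 'I_n * 'I_n | fill_transversal rc.1 rc.2 == Some s] =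
            (r0, sigma r0) |: [set rc : 'I_n * 'I_n | L rc.1 rc.2 == Some s].
    apply/setP => [[r c]]; rewrite !inE fill_someE /= xpair_eqE orbC.
    rewrite (canF_eq (invF_f tau_inj)) -/r0 andbC.
    by case: eqP => [->|]; rewrite ?andbF.
  by rewrite cardsU1 Hs inE /= blank.
- move=> r; have -> : [set c | fill_transversal r c != None] =
                      sigma r |: [set c | L r c != None].
    by apply/setP => c; rewrite !inE fill_filledE orbC.
  by rewrite cardsU1 Hr inE blank.
- move=> c; set r0 := invF sigma_inj c.
  have -> : [set r | fill_transversal r c != None] = r0 |: [set r | L r c != None].
    apply/setP => r; rewrite !inE fill_filledE orbC.
    by rewrite eq_sym (canF_eq (invF_f sigma_inj)).
  by rewrite cardsU1 Hc inE /r0 -{2}(f_invF sigma_inj c) blank.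
Qed.

End Filling.

Theorem theorem5p7 (n k : nat) (L : parray n) :
  0 < n -> 0 < k -> 4 * k <= n ->
  homogeneous_pls k L ->
  exists M : parray n, homogeneous_pls k.+1 M /\ pls_contained L M.
Proof.
move=> _ _ le4kn HL.
have [sigma [sigma_inj blank]] : exists sigma : 'I_n -> 'I_n,
    injective sigma /\ forall r, L r (sigma r) = None.
  by apply: blank_transversal HL _; lia.
have [tau [tau_inj fresh]] := fresh_symbols HL sigma_inj le4kn.
exists (fill_transversal L sigma tau); split.
- exact: fill_homogeneous.
- exact: fill_contains.
Qed.
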